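(* For $n\ge 3$ let $C_n$ be the cycle graph with $n$ vertices, and let $\mathbb{Z}$ denote the one-dimensional integer lattice (the infinite 2-regular path graph on vertex set $\mathbb{Z}$ with edges $\{k,k+1\}$). Then for every complex $u$ with $|u|<1$, \[ \lim_{n\to\infty}\zeta_{C_n}(u)=\zeta_{\mathbb{Z}}(u). \]
   Context: For a vertex transitive $(q+1)$-regular graph $G$ and a fixed vertex $x_0$, the generalized Ihara zeta function is $\zeta_G(u)=\exp\big(\sum_{m\ge1}\frac{N^0_m}{m}u^m\big)$, where $N^0_m$ is the number of reduced $x_0$-cycles of length $m$ in $G$. Here a path of length $m$ is a sequence $(e_1,\ldots,e_m)$ of oriented edges (arcs) with the terminus of $e_i$ equal to the origin of $e_{i+1}$; it has a backtracking if $e_{i+1}=e_i^{-1}$ for some $i$ (where $e^{-1}$ is the reversed arc); an $x_0$-cycle is a path starting and ending at $x_0$; it has a tail if $e_m=e_1^{-1}$; it is reduced if it has neither a backtracking nor a tail. *)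

From Stdlib Require Import Reals List Arith ZArith.
From Coquelicot Require Export Coquelicot.
Import ListNotations.

(* A locally finite simple graph is given by a vertex type with decidable
   equality and a neighbour list; an arc (oriented edge) is an ordered pair
   (x,y) with y a neighbour of x; its inverse is (y,x). *)
Section Graph.
Variables (V : Type) (eq_dec : forall x y : V, {x = y} + {x <> y})
          (nbrs : V -> list V).

Definition veqb (x y : V) : bool := if eq_dec x y then true else false.
Definition arc_eqb (a b : V * V) : bool := veqb (fst a) (fst b) && veqb (snd a) (snd b).
Definition arc_inv (a : V * V) : V * V := (snd a, fst a).

Fixpoint paths (m : nat) (x : V) : list (list (V * V)) :=
  match m with
  | O => [nil]
  | S m' => flat_map (fun y => map (cons (x, y)) (paths m' y)) (nbrs x)
  end.

Fixpoint has_backtracking (p : list (V * V)) : bool :=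
  match p with
  | a :: ((b :: _) as t) => arc_eqb b (arc_inv a) || has_backtracking t
  | _ => false
  end.

Definition ends_at (x0 : V) (p : list (V * V)) : bool :=
  match p with
  | nil => true
  | a :: t => veqb (snd (last t a)) x0
  end.

Definition has_tail (p : list (V * V)) : bool :=
  match p with
  | nil => false
  | a :: t => arc_eqb (last t a) (arc_inv a)
  end.

Definition reduced_cycle (x0 : V) (p : list (V * V)) : bool :=
  ends_at x0 p && negb (has_backtracking p) && negb (has_tail p).

Definition Nred (x0 : V) (m : nat) : nat :=
  length (filter (reduced_cycle x0) (paths m x0)).

(* zeta_val x0 u z : the generalized Ihara zeta function at u equals z, i.e.
   the series s = sum_{m>=1} N^0_m/m u^m converges and z = exp(s), with the
   complex exponential written as its power series sum_k s^k/k!. *)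
Definition zeta_val (x0 : V) (u z : C) : Prop :=
  exists s : C,
    is_series (fun k : nat =>
       Cmult (RtoC (INR (Nred x0 (S k)) / INR (S k))) (pow_n u (S k))) s
    /\ is_series (fun k : nat => Cdiv (pow_n s k) (RtoC (INR (fact k)))) z.
End Graph.

Definition cycle_nbrs (n : nat) (k : nat) : list nat :=
  [ (S k) mod n ; (k + n - 1) mod n ].

Definition Z_nbrs (k : Z) : list Z := [ (k + 1)%Z ; (k - 1)%Z ].

Definition zeta_cycle (n : nat) (u z : C) : Prop :=
  zeta_val nat Nat.eq_dec (cycle_nbrs n) 0%nat u z.

Definition zeta_Z (u z : C) : Prop :=
  zeta_val Z Z.eq_dec Z_nbrs 0%Z u z.

(* In a graph where each vertex x has exactly the two neighbours f x and g x, with f and g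
   mutually inverse, a path without backtracking can never reverse its direction, so the only
   candidates of length m from x are the two straight paths x, f x, ..., f^m x and
   x, g x, ..., g^m x.  Hence N^0_m <= 2, and N^0_m = 0 unless f^m x = x or g^m x = x: for C_n
   this forces m >= n, and for Z it never happens.  So log zeta_Z = 0, while
   |log zeta_{C_n}(u)| <= 2 sum_{m >= n} |u|^m -> 0, and |exp s - 1| <= exp |s| - 1 concludes. *)

From Stdlib Require Import Reals List ZArith Lia Lra Bool ClassicalEpsilon.
From Stdlib Require FinFun.
From Coquelicot Require Import Coquelicot.
Import ListNotations.

Lemma NoDup_flat_map {A B} (F : A -> list B) (l : list A) :
  NoDup l -> (forall y, In y l -> NoDup (F y)) ->
  (forall y y' b, In y l -> In y' l -> In b (F y) -> In b (F y') -> y = y') ->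
  NoDup (flat_map F l).
Proof.
  induction l as [|y l IHl]; intros Hl HF Hdisj; [constructor|].
  apply NoDup_cons_iff in Hl as [Hy Hl]; simpl.
  apply NoDup_app.
  - apply HF; now left.
  - apply IHl; [exact Hl | intros z Hz; apply HF; now right |].
    intros z z' b Hz Hz'; apply Hdisj; now right.
  - intros b Hb Hb'. apply in_flat_map in Hb' as [y' [Hy' Hb']].
    assert (y = y') as <- by (apply (Hdisj _ _ b); simpl; auto).
    contradiction.
Qed.

Lemma last_cons {A} (t : list A) : forall a b, last (b :: t) a = last t b.
Proof.
  induction t as [|c t IHt]; intros a b; [reflexivity|].
  change (last (c :: t) a = last (c :: t) b); rewrite !IHt; reflexivity.
Qed.

Section Paths.
Variables (V : Type) (eq_dec : forall x y : V, {x = y} + {x <> y}) (nbrs : V -> list V).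
Local Open Scope nat_scope.

Lemma veqb_spec x y : veqb V eq_dec x y = true <-> x = y.
Proof. unfold veqb; destruct (eq_dec x y); split; congruence. Qed.

Lemma arc_eqb_spec a b : arc_eqb V eq_dec a b = true <-> a = b.
Proof.
  destruct a as [a1 a2], b as [b1 b2]; unfold arc_eqb; simpl.
  rewrite andb_true_iff, !veqb_spec; split; [intros [-> ->] | intros [= -> ->]]; auto.
Qed.

Lemma NoDup_paths (P : V -> Prop) :
  (forall x y, P x -> In y (nbrs x) -> P y) -> (forall x, P x -> NoDup (nbrs x)) ->
  forall m x, P x -> NoDup (paths V nbrs m x).
Proof.
  intros P_nbrs NoDup_nbrs m; induction m as [|m IHm]; intros x Px; simpl.
  - repeat constructor; auto.
  - apply NoDup_flat_map; auto.
    + intros y Hy. apply FinFun.Injective_map_NoDup; [intros p q [=]; auto|].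
      apply IHm; eauto.
    + intros y y' b Hb Hb' [p [<- _]]%in_map_iff [q [[= <- _] _]]%in_map_iff; auto.
Qed.

Fixpoint straight_path (h : V -> V) (m : nat) (x : V) : list (V * V) :=
  match m with O => [] | S m' => (x, h x) :: straight_path h m' (h x) end.

Lemma last_straight_path h m : forall x a,
  snd a = x -> snd (last (straight_path h m x) a) = Nat.iter m h x.
Proof.
  induction m as [|m IHm]; intros x a Ha; [exact Ha|].
  simpl straight_path; rewrite last_cons, IHm, <- Nat.iter_succ_r; reflexivity.
Qed.

Lemma ends_at_straight_path h m x y :
  ends_at V eq_dec y (straight_path h (S m) x) = veqb V eq_dec (Nat.iter (S m) h x) y.
Proof.
  simpl straight_path; unfold ends_at.
  rewrite last_straight_path, <- Nat.iter_succ_r; reflexivity.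
Qed.

Lemma straight_path_turn_back h h' m x : h' (h x) = x ->
  has_backtracking V eq_dec ((x, h x) :: straight_path h' m (h x)) = false -> m = 0.
Proof.
  intros Hhh' Hnb; destruct m; [reflexivity|].
  simpl in Hnb; rewrite Hhh' in Hnb.
  assert (arc_eqb V eq_dec (h x, x) (h x, x) = true) as E by now apply arc_eqb_spec.
  unfold arc_inv in Hnb; simpl in Hnb; rewrite E in Hnb; discriminate.
Qed.

Lemma has_backtracking_cons_false a q :
  has_backtracking V eq_dec (a :: q) = false -> has_backtracking V eq_dec q = false.
Proof. destruct q; [reflexivity|]; simpl; intros [_ H]%orb_false_iff; exact H. Qed.

Lemma reduced_cycle_spec x0 p : reduced_cycle V eq_dec x0 p = true ->
  ends_at V eq_dec x0 p = true /\ has_backtracking V eq_dec p = false.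
Proof.
  unfold reduced_cycle; intros [[Hend Hnb]%andb_true_iff _]%andb_true_iff.
  split; [exact Hend | now apply negb_true_iff].
Qed.

End Paths.

Section TwoRegular.
Variables (V : Type) (eq_dec : forall x y : V, {x = y} + {x <> y})
  (f g : V -> V) (P : V -> Prop).
(* f and g need only be inverse on an invariant set P: on the cycle graph the neighbour maps
   k |-> (k + 1) mod n and k |-> (k + n - 1) mod n are inverse only on {0, ..., n - 1}. *)
Hypotheses (P_f : forall x, P x -> P (f x)) (P_g : forall x, P x -> P (g x))
  (g_f : forall x, P x -> g (f x) = x) (f_g : forall x, P x -> f (g x) = x)
  (f_neq_g : forall x, P x -> f x <> g x).
Let nbrs x := [f x; g x].
Local Open Scope nat_scope.

Lemma nonbacktracking_path_straight m : forall x p, P x -> In p (paths V nbrs m x) ->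
  has_backtracking V eq_dec p = false -> p = straight_path V f m x \/ p = straight_path V g m x.
Proof.
  induction m as [|m IHm]; intros x p Px Hp Hnb.
  { simpl in Hp; destruct Hp as [<- | []]; now left. }
  apply in_flat_map in Hp as [y [Hy Hp]].
  apply in_map_iff in Hp as [q [<- Hq]].
  pose proof (has_backtracking_cons_false V eq_dec _ _ Hnb) as Hq_nb.
  destruct Hy as [<- | [<- | []]].
  - destruct (IHm (f x) q (P_f x Px) Hq Hq_nb) as [-> | ->]; [now left|].
    apply straight_path_turn_back in Hnb as ->; [now left | now apply g_f].
  - destruct (IHm (g x) q (P_g x Px) Hq Hq_nb) as [-> | ->]; [|now right].
    apply straight_path_turn_back in Hnb as ->; [now right | now apply f_g].
Qed.

Lemma Nred_le_2 m x : P x -> Nred V eq_dec nbrs x m <= 2.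
Proof.
  intros Px; unfold Nred.
  change 2 with (length [straight_path V f m x; straight_path V g m x]).
  apply NoDup_incl_length.
  - apply NoDup_filter, (NoDup_paths V nbrs P); [| |exact Px].
    + intros y z Py [<- | [<- | []]]; auto.
    + intros y Py; repeat constructor; [|intros []].
      intros [Hfg | []]; exact (f_neq_g y Py (eq_sym Hfg)).
  - intros p [Hp [_ Hnb]%reduced_cycle_spec]%filter_In.
    destruct (nonbacktracking_path_straight m x p Px Hp Hnb) as [-> | ->]; simpl; auto.
Qed.

Lemma Nred_eq_0 m x : P x -> Nat.iter (S m) f x <> x -> Nat.iter (S m) g x <> x ->
  Nred V eq_dec nbrs x (S m) = 0.
Proof.
  intros Px Hf Hg; unfold Nred.
  destruct (filter _ _) as [|p ps] eqn:E; [reflexivity|exfalso].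
  assert (Hp : In p (p :: ps)) by now left.
  rewrite <- E in Hp; apply filter_In in Hp as [Hp [Hend Hnb]%reduced_cycle_spec].
  destruct (nonbacktracking_path_straight (S m) x p Px Hp Hnb) as [-> | ->];
    rewrite ends_at_straight_path, veqb_spec in Hend; contradiction.
Qed.

End TwoRegular.

Section CycleGraph.
Local Open Scope nat_scope.
Variable n : nat.
Hypothesis n_ge_3 : 3 <= n.
Let succ k := S k mod n.
Let pred k := (k + n - 1) mod n.

Lemma mod_eq_of_decomp a q r : r < n -> a = q * n + r -> a mod n = r.
Proof. intros Hr Ha; symmetry; apply (Nat.mod_unique a n q r); lia. Qed.

Lemma cycle_succ_eq k : k < n -> succ k = if Nat.eq_dec (S k) n then 0 else S k.
Proof.
  intros Hk; unfold succ; destruct (Nat.eq_dec (S k) n);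
    [apply (mod_eq_of_decomp _ 1) | apply (mod_eq_of_decomp _ 0)]; lia.
Qed.

Lemma cycle_pred_eq k : k < n -> pred k = if Nat.eq_dec k 0 then n - 1 else k - 1.
Proof.
  intros Hk; unfold pred; destruct (Nat.eq_dec k 0);
    [apply (mod_eq_of_decomp _ 0) | apply (mod_eq_of_decomp _ 1)]; lia.
Qed.

Lemma cycle_succ_lt k : succ k < n.
Proof. apply Nat.mod_upper_bound; lia. Qed.

Lemma cycle_pred_lt k : pred k < n.
Proof. apply Nat.mod_upper_bound; lia. Qed.

Lemma cycle_pred_succ k : k < n -> pred (succ k) = k.
Proof.
  intros Hk; rewrite cycle_pred_eq, cycle_succ_eq by (apply cycle_succ_lt || exact Hk).
  destruct (Nat.eq_dec (S k) n), (Nat.eq_dec _ 0); lia.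
Qed.

Lemma cycle_succ_pred k : k < n -> succ (pred k) = k.
Proof.
  intros Hk; rewrite cycle_succ_eq, cycle_pred_eq by (apply cycle_pred_lt || exact Hk).
  destruct (Nat.eq_dec k 0), (Nat.eq_dec _ n); lia.
Qed.

Lemma cycle_succ_neq_pred k : k < n -> succ k <> pred k.
Proof.
  intros Hk; rewrite cycle_succ_eq, cycle_pred_eq by exact Hk.
  destruct (Nat.eq_dec k 0), (Nat.eq_dec _ n); lia.
Qed.

Lemma cycle_iter_succ k : k < n -> Nat.iter k succ 0 = k.
Proof.
  induction k as [|k IHk]; intros Hk; [reflexivity|].
  simpl; rewrite IHk, cycle_succ_eq by lia.
  destruct (Nat.eq_dec (S k) n); lia.
Qed.

Lemma cycle_iter_pred k : 0 < k < n -> Nat.iter k pred 0 = n - k.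
Proof.
  induction k as [|[|k] IHk]; intros Hk; [lia| |].
  - simpl; rewrite cycle_pred_eq by lia; reflexivity.
  - change (pred (Nat.iter (S k) pred 0) = n - S (S k)).
    rewrite IHk, cycle_pred_eq by lia.
    destruct (Nat.eq_dec _ 0); lia.
Qed.

Lemma cycle_Nred_le_2 m : Nred nat Nat.eq_dec (cycle_nbrs n) 0 m <= 2.
Proof.
  apply (Nred_le_2 nat Nat.eq_dec succ pred (fun k => k < n));
    auto using cycle_succ_lt, cycle_pred_lt, cycle_pred_succ, cycle_succ_pred,
      cycle_succ_neq_pred; lia.
Qed.

Lemma cycle_Nred_eq_0 m : S m < n -> Nred nat Nat.eq_dec (cycle_nbrs n) 0 (S m) = 0.
Proof.
  intros Hm.
  apply (Nred_eq_0 nat Nat.eq_dec succ pred (fun k => k < n));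
    auto using cycle_succ_lt, cycle_pred_lt, cycle_pred_succ, cycle_succ_pred,
      cycle_succ_neq_pred; [lia | rewrite cycle_iter_succ | rewrite cycle_iter_pred]; lia.
Qed.

End CycleGraph.

Lemma Z_iter_add (c : Z) k z : Nat.iter k (fun x => (x + c)%Z) z = (z + Z.of_nat k * c)%Z.
Proof.
  revert z; induction k as [|k IHk]; intros z; [simpl; lia|].
  rewrite Nat.iter_succ, IHk; lia.
Qed.

Lemma Z_Nred_eq_0 m : Nred Z Z.eq_dec Z_nbrs 0%Z (S m) = 0%nat.
Proof.
  apply (Nred_eq_0 Z Z.eq_dec (fun x => (x + 1)%Z) (fun x => (x - 1)%Z) (fun _ => True));
    try (intros; lia).
  - rewrite Z_iter_add; lia.
  - change (Nat.iter (S m) (fun x => (x + -1)%Z) 0%Z <> 0%Z); rewrite Z_iter_add; lia.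
Qed.

Lemma series_Cmod_le (a : nat -> C) (b : nat -> R) (s : C) (t : R) :
  is_series a s -> is_series b t -> (forall k, Cmod (a k) <= b k) -> Cmod s <= t.
Proof.
  intros Ha Hb Hab.
  apply (is_lim_seq_le (fun N => Cmod (sum_n a N)) (sum_n b) (Cmod s) t); [| |exact Hb].
  - intros N; eapply Rle_trans; [apply (@norm_sum_n_m _ C_NormedModule)|].
    now apply sum_n_m_le.
  - exact (filterlim_comp _ _ _ _ _ _ _ _ Ha (@filterlim_norm _ C_NormedModule s)).
Qed.

Lemma series_exists_of_Cmod_le (a : nat -> C) (b : nat -> R) (t : R) :
  (forall k, Cmod (a k) <= b k) -> is_series b t -> exists s : C, is_series a s /\ Cmod s <= t.
Proof.
  intros Hab Hb.
  destruct (@ex_series_le _ C_CompleteNormedModule a b Hab (ex_intro _ t Hb)) as [s Hs].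
  exists s; split; [exact Hs | exact (series_Cmod_le a b s t Hs Hb Hab)].
Qed.

Lemma Cmod_pow_n (s : C) k : Cmod (pow_n s k) = Cmod s ^ k.
Proof.
  induction k as [|k IHk]; [apply Cmod_1|].
  change (Cmod (Cmult s (pow_n s k)) = Cmod s * Cmod s ^ k).
  rewrite Cmod_mult, IHk; reflexivity.
Qed.

Lemma exp_series_near_1 (s : C) : exists z : C,
  is_series (fun k => Cdiv (pow_n s k) (RtoC (INR (fact k)))) z /\
  Cmod (z - 1)%C <= exp (Cmod s) - 1.
Proof.
  set (a := fun k => Cdiv (pow_n s k) (RtoC (INR (fact k)))).
  set (b := fun k => Cmod s ^ k / INR (fact k)).
  assert (Hab : forall k, Cmod (a k) = b k).
  { intros k; unfold a, b; rewrite Cmod_div, Cmod_pow_n, Cmod_R, Rabs_pos_eq;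
      [reflexivity | apply pos_INR |].
    intros H%RtoC_inj; exact (INR_fact_neq_0 k H). }
  assert (Hb : is_series b (exp (Cmod s))).
  { eapply is_series_ext; [|apply is_exp_Reals].
    intros k; unfold b, scal; simpl; rewrite pow_n_pow; reflexivity. }
  destruct (series_exists_of_Cmod_le a b _ (fun k => Req_le _ _ (Hab k)) Hb) as [z [Hz _]].
  exists z; split; [exact Hz|].
  (* drop the k = 0 terms, both equal to 1 *)
  apply (series_Cmod_le (fun k => a (S k)) (fun k => b (S k))).
  - apply is_series_incr_1.
    match goal with |- is_series _ ?l => replace l with z; [exact Hz|] end.
    unfold a, plus; simpl; change (@one C_Ring) with (RtoC 1).
    field.
  - apply is_series_incr_1.
    match goal with |- is_series _ ?l => replace l with (exp (Cmod s)); [exact Hb|] end.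
    unfold b, plus; simpl; field.
  - intros k; apply Req_le, Hab.
Qed.

Lemma pow_le_pow_of_le_1 (r : R) (m k : nat) : 0 <= r <= 1 -> (m <= k)%nat -> r ^ k <= r ^ m.
Proof.
  intros Hr Hmk; induction Hmk as [|k _ IH]; [lra|].
  pose proof (pow_le r k (proj1 Hr)); simpl; nra.
Qed.

Lemma sqrt_Cmod_lt_1 (u : C) : Cmod u < 1 -> 0 <= sqrt (Cmod u) < 1.
Proof.
  intros Hu; split; [apply sqrt_pos|]; rewrite <- sqrt_1; apply sqrt_lt_1_alt.
  split; [apply Cmod_ge_0 | exact Hu].
Qed.

Lemma log_series_bound (N : nat -> nat) (K n : nat) (u : C) :
  Cmod u < 1 -> (forall m, N (S m) <= K)%nat -> (forall m, S m < n -> N (S m) = 0)%nat ->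
  exists s : C,
    is_series (fun k => Cmult (RtoC (INR (N (S k)) / INR (S k))) (pow_n u (S k))) s /\
    Cmod s <= INR K * sqrt (Cmod u) / (1 - sqrt (Cmod u)) * sqrt (Cmod u) ^ n.
Proof.
  intros Hu HK Hn; pose proof (sqrt_Cmod_lt_1 u Hu) as Hr; set (r := sqrt (Cmod u)) in *.
  assert (Hur : Cmod u = r * r) by (symmetry; apply sqrt_sqrt, Cmod_ge_0).
  (* |u|^m = r^m r^m <= r^n r^m once m >= n: a geometric majorant uniform in N *)
  apply series_exists_of_Cmod_le with (b := fun k => INR K * r ^ n * r ^ S k).
  - intros k.
    pose proof (pos_INR K); pose proof (pow_le r n (proj1 Hr));
      pose proof (pow_le r (S k) (proj1 Hr)).
    rewrite Cmod_mult, Cmod_R, Cmod_pow_n, Hur, Rpow_mult_distr.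
    destruct (Nat.lt_ge_cases (S k) n) as [Hk|Hk].
    + rewrite Hn, Rdiv_0_l, Rabs_R0, Rmult_0_l by exact Hk.
      apply Rmult_le_pos; [apply Rmult_le_pos|]; assumption.
    + assert (HNk : 0 <= INR (N (S k)) / INR (S k) <= INR K).
      { pose proof (le_INR _ _ (HK k)); pose proof (pos_INR (N (S k))).
        assert (1 <= INR (S k)) by (apply (le_INR 1); lia).
        split; [apply Rdiv_le_0_compat; lra|].
        apply Rle_div_l; nra. }
      pose proof (pow_le_pow_of_le_1 r n (S k) (conj (proj1 Hr) (Rlt_le _ _ (proj2 Hr))) Hk).
      rewrite Rabs_pos_eq, Rmult_assoc by apply HNk.
      apply Rmult_le_compat; try apply HNk; [|nra].
      apply Rmult_le_pos; assumption.
  - assert (Hgeom : Rabs r < 1) by (rewrite Rabs_pos_eq; lra).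
    replace (INR K * r / (1 - r) * r ^ n) with (scal (INR K * r ^ n * r) (/ (1 - r)))
      by (unfold scal; simpl; unfold mult; simpl; field; lra).
    eapply is_series_ext; [|exact (is_series_scal _ _ _ (is_series_geom r Hgeom))].
    intros k; unfold scal; simpl; unfold mult; simpl; ring.
Qed.

Lemma zeta_val_near_1 (V : Type) (eq_dec : forall x y : V, {x = y} + {x <> y})
    (nbrs : V -> list V) (x0 : V) (u : C) (K n : nat) :
  Cmod u < 1 -> (forall m, Nred V eq_dec nbrs x0 (S m) <= K)%nat ->
  (forall m, S m < n -> Nred V eq_dec nbrs x0 (S m) = 0)%nat ->
  exists z : C, zeta_val V eq_dec nbrs x0 u z /\
    Cmod (z - 1)%C <= exp (INR K * sqrt (Cmod u) / (1 - sqrt (Cmod u)) * sqrt (Cmod u) ^ n) - 1.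
Proof.
  intros Hu HK Hn.
  destruct (log_series_bound _ K n u Hu HK Hn) as [s [Hs Hs_le]].
  destruct (exp_series_near_1 s) as [z [Hz Hz_near]].
  exists z; split; [exists s; split; assumption|].
  apply Rle_trans with (exp (Cmod s) - 1); [exact Hz_near|].
  apply Rplus_le_compat_r.
  destruct (Rle_lt_or_eq_dec _ _ Hs_le) as [Hlt | ->]; [|apply Rle_refl].
  now apply Rlt_le, exp_increasing.
Qed.

Lemma lim_exp_geom_sub_1 (c r : R) : Rabs r < 1 -> is_lim_seq (fun n => exp (c * r ^ n) - 1) 0.
Proof.
  intros Hr.
  replace 0 with (exp 0 - 1) by (rewrite exp_0; ring).
  apply (is_lim_seq_continuous (fun x => exp x - 1)).
  - apply continuity_pt_minus; [apply derivable_continuous_pt, derivable_exp|].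
    apply continuity_pt_const; now intros ? ?.
  - replace (Finite 0) with (Rbar_mult c 0) by (simpl; f_equal; ring).
    now apply is_lim_seq_scal_l, is_lim_seq_geom.
Qed.

Lemma filterlim_of_Cmod_bound (z : nat -> C) (l : C) (e : nat -> R) :
  is_lim_seq e 0 -> eventually (fun n => Cmod (z n - l)%C <= e n) ->
  filterlim z eventually (locally l).
Proof.
  intros He Hz; apply filterlim_locally; intros eps.
  apply is_lim_seq_spec in He.
  eapply filter_imp; [|exact (filter_and _ _ (He eps) Hz)].
  intros n [Hen Hzn]; apply (@norm_compat1 _ C_NormedModule).
  apply Rle_lt_trans with (e n); [exact Hzn|].
  apply Rabs_lt_between in Hen; lra.
Qed.

Lemma zeta_Z_eq_1 (u : C) : Cmod u < 1 -> zeta_Z u (RtoC 1).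
Proof.
  intros hu.
  destruct (zeta_val_near_1 Z Z.eq_dec Z_nbrs 0%Z u 0 0 hu) as [z [Hz Hz_near]].
  - intros m; rewrite Z_Nred_eq_0; lia.
  - intros m _; apply Z_Nred_eq_0.
  - simpl INR in Hz_near; rewrite Rmult_0_l, Rdiv_0_l, Rmult_0_l, exp_0 in Hz_near.
    assert (Hz1 : (z - 1)%C = 0%C) by (apply Cmod_eq_0, Rle_antisym; [lra | apply Cmod_ge_0]).
    replace (RtoC 1) with z; [exact Hz|].
    replace z with ((z - 1) + 1)%C by ring; rewrite Hz1; ring.
Qed.

Lemma zeta_cycle_near_1 (n : nat) (u : C) : (3 <= n)%nat -> Cmod u < 1 ->
  exists z : C, zeta_cycle n u z /\
    Cmod (z - 1)%C <= exp (INR 2 * sqrt (Cmod u) / (1 - sqrt (Cmod u)) * sqrt (Cmod u) ^ n) - 1.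
Proof.
  intros Hn hu; apply (zeta_val_near_1 nat Nat.eq_dec (cycle_nbrs n) 0%nat u 2 n); [exact hu | |].
  - intros m; now apply cycle_Nred_le_2.
  - intros m; now apply cycle_Nred_eq_0.
Qed.

Theorem theorem4 (u : C) (hu : (Cmod u < 1)%R) :
  exists (zZ : C) (zc : nat -> C),
    zeta_Z u zZ /\
    (forall n : nat, (3 <= n)%nat -> zeta_cycle n u (zc n)) /\
    filterlim zc eventually (locally zZ).
Proof.
  set (e n := exp (INR 2 * sqrt (Cmod u) / (1 - sqrt (Cmod u)) * sqrt (Cmod u) ^ n) - 1).
  destruct (choice (fun n z => (3 <= n)%nat -> zeta_cycle n u z /\ Cmod (z - 1)%C <= e n))
    as [zc Hzc].
  { intros n; destruct (le_lt_dec 3 n) as [Hn | Hn]; [|exists 1%C; lia].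
    destruct (zeta_cycle_near_1 n u Hn hu) as [z Hz]; exists z; intros _; exact Hz. }
  exists (RtoC 1), zc; split; [now apply zeta_Z_eq_1 | split; [intros n Hn; apply Hzc, Hn |]].
  apply filterlim_of_Cmod_bound with e.
  - apply lim_exp_geom_sub_1; rewrite Rabs_pos_eq; apply sqrt_Cmod_lt_1, hu.
  - exists 3%nat; intros n Hn; apply Hzc, Hn.
Qed.
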